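(* Let $X$ be an infinite set with a metric $d$ inducing the discrete topology and having bounded geometry, equipped with the counting measure. Let $\xi$ be a filter on $X$ and $T\in\mathscr{E}(X)$. Then $$T\in\mathscr{G}_\xi(X)\iff\lim_{x\to\xi}\ \sup_{y,z\in B_x(r)}|\langle y,Tz\rangle|=0\ \text{for all } r>0.$$ Moreover, if $\xi$ is coarse, then $\mathscr{G}_\xi(X)=\{T\in\mathscr{E}(X):\lim_{x,y\to\xi}\langle x,Ty\rangle=0\}$.
   Context: Bounded geometry: for every $r>0$ the number of points of $B_x(r)=\{y:d(x,y)\le r\}$ is bounded by a constant independent of $x$. $L^2(X)=\ell^2(X)$ and each $x\in X$ is identified with the basis vector $\mathbf{1}_{\{x\}}$, so $\langle x,Ty\rangle$ is the matrix coefficient of $T$. $\mathbf{1}_A$ is multiplication by the characteristic function of $A$. A kernel $k$ on $X\times X$ is controlled if $k(x,y)=0$ whenever $d(x,y)>r$ for some $r$; $\mathscr{E}(X)$ is the norm closure of the operators $(Op(k)f)(x)=\sum_y k(x,y)f(y)$ with $k$ bounded, uniformly continuous and controlled. For a filter $\xi$, $\lim_{x\to\xi}f(x)=0$ means $\{x:|f(x)|<\varepsilon\}\in\xi$ for each $\varepsilon>0$, and $\lim_{x,y\to\xi}g(x,y)=0$ means that for each $\varepsilon>0$ there is $F\in\xi$ with $|g(x,y)|<\varepsilon$ for all $x,y\in F$. $\mathscr{G}_\xi(X)=\{T\in\mathscr{E}(X):\lim_{x\to\xi}\|\mathbf{1}_{B_x(r)}T\|=0\ \forall r>0\}$. With $F^{(r)}=\{x:\inf_{y\notin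 F}d(x,y)>r\}$, $\xi$ is coarse if $F\in\xi\Rightarrow F^{(r)}\in\xi$ for all $r>0$. *)

From HB Require Import structures.
From mathcomp Require Import all_boot all_order all_algebra.
From mathcomp Require Import all_classical all_reals all_analysis.
From mathcomp Require Import complex.

Set Implicit Arguments.
Unset Strict Implicit.
Unset Printing Implicit Defensive.

Import Order.TTheory GRing.Theory Num.Theory.
Local Open Scope classical_set_scope.
Local Open Scope ring_scope.

Section Defs.
Context {R : realType} {X : choiceType}.
Local Notation C := (R[i]).

Definition cabs (z : C) : R := ComplexField.Normc.normc z.

Definition is_metric (d : X -> X -> R) : Prop :=
  [/\ (forall x y, 0 <= d x y),
      (forall x y, d x y = 0 <-> x = y),
      (forall x y, d x y = d y x) &
      (forall x y z, d x z <= d x y + d y z)].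

Definition ball_ (d : X -> X -> R) (x : X) (r : R) : set X :=
  [set y | d x y <= r].

Definition discrete_metric (d : X -> X -> R) : Prop :=
  forall x, exists2 e : R, 0 < e & forall y, d x y < e -> y = x.

(** bounded geometry: for every r > 0 the number of points of B_x(r)
    is bounded by a constant independent of x *)
Definition bounded_geometry (d : X -> X -> R) : Prop :=
  forall r : R, 0 < r -> exists N : nat, forall (x : X) (s : seq X),
    uniq s -> (forall y, y \in s -> ball_ d x r y) -> (size s <= N)%N.

(** l^2(X) with the counting measure *)
Definition l2 (f : X -> C) : Prop :=
  (\esum_(x in [set: X]) ((cabs (f x)) ^+ 2)%:E < +oo)%E.

(** the l^2 norm (+oo outside l^2) *)
Definition l2norm (f : X -> C) : \bar R :=
  if `[< l2 f >] then
    (Num.sqrt (fine (\esum_(x in [set: X]) ((cabs (f x)) ^+ 2)%:E)))%:E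
  else +oo%E.

(** operators are maps (X -> C) -> (X -> C), considered on l^2 *)
Definition opnorm (A : (X -> C) -> (X -> C)) : \bar R :=
  ereal_sup [set l2norm (A f) | f in [set f | l2 f /\ (l2norm f <= 1)%E]].

Definition bounded_op (T : (X -> C) -> (X -> C)) : Prop :=
  [/\ (forall (a : C) f g, l2 f -> l2 g ->
         T (fun x => a * f x + g x) = (fun x => a * T f x + T g x)),
      (forall f, l2 f -> l2 (T f)) &
      (exists M : R, (opnorm T <= M%:E)%E)].

Definition kernel_bounded (k : X -> X -> C) : Prop :=
  exists M : R, forall x y, cabs (k x y) <= M.

Definition kernel_unif_cont (d : X -> X -> R) (k : X -> X -> C) : Prop :=
  forall e : R, 0 < e -> exists2 delta : R, 0 < delta &
    forall x y x' y', d x x' < delta -> d y y' < delta ->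
      cabs (k x y - k x' y') < e.

Definition kernel_controlled (d : X -> X -> R) (k : X -> X -> C) : Prop :=
  exists r : R, forall x y, r < d x y -> k x y = 0.

Definition admissible_kernel (d : X -> X -> R) (k : X -> X -> C) : Prop :=
  [/\ kernel_bounded k, kernel_unif_cont d k & kernel_controlled d k].

(** (Op(k) f)(x) = sum_y k(x,y) f(y)  (a finite sum for controlled k under
    bounded geometry; written as a finitely supported sum) *)
Definition Op (k : X -> X -> C) (f : X -> C) : X -> C :=
  fun x => \sum_(y \in [set y | k x y != 0]) (k x y * f y).

Definition opsub (A B : (X -> C) -> (X -> C)) : (X -> C) -> (X -> C) :=
  fun f x => A f x - B f x.

Definition in_E (d : X -> X -> R) (T : (X -> C) -> (X -> C)) : Prop :=
  bounded_op T /\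
  forall e : R, 0 < e -> exists k, admissible_kernel d k /\
    (opnorm (opsub T (Op k)) < e%:E)%E.

Definition restr (A : set X) (T : (X -> C) -> (X -> C)) : (X -> C) -> (X -> C) :=
  fun f x => \1_A x * T f x.

Definition flim0 (xi : set_system X) (g : X -> \bar R) : Prop :=
  forall e : R, 0 < e -> xi [set x | (g x < e%:E)%E].

Definition in_G (d : X -> X -> R) (xi : set_system X)
    (T : (X -> C) -> (X -> C)) : Prop :=
  in_E d T /\
  forall r : R, 0 < r -> flim0 xi (fun x => opnorm (restr (ball_ d x r) T)).

(** matrix coefficient <y, T z> *)
Definition coef (T : (X -> C) -> (X -> C)) (y z : X) : C :=
  T (\1_[set z]) y.

Definition ball_coef_sup (d : X -> X -> R) (T : (X -> C) -> (X -> C))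
    (x : X) (r : R) : \bar R :=
  ereal_sup [set (cabs (coef T p.1 p.2))%:E |
               p in [set p : X * X | ball_ d x r p.1 /\ ball_ d x r p.2]].

(** F^(r) = { x : inf_{y notin F} d(x,y) > r }  (inf of the empty set = +oo) *)
Definition rinterior (d : X -> X -> R) (F : set X) (r : R) : set X :=
  [set x | (r%:E < ereal_inf [set (d x y)%:E | y in ~` F])%E].

Definition coarse_filter (d : X -> X -> R) (xi : set_system X) : Prop :=
  forall (F : set X) (r : R), 0 < r -> xi F -> xi (rinterior d F r).

Definition flim0_2 (xi : set_system X) (g : X -> X -> C) : Prop :=
  forall e : R, 0 < e -> exists2 F, xi F &
    forall x y, F x -> F y -> cabs (g x y) < e.

End Defs.

From Pilot Require Import Defs.
From HB Require Import structures.
From mathcomp Require Import all_boot all_order all_algebra.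
From mathcomp Require Import all_classical all_reals all_analysis.
From mathcomp Require Import complex.
From mathcomp Require Import ring lra.
Import Order.TTheory GRing.Theory Num.Theory.
Local Open Scope classical_set_scope.
Local Open Scope ring_scope.

(* Testing [1_A T] on the unit vector [1_{z}] gives [|<y, T z>| <= ||1_A T||] for
   [y] in [A]; this is the easy implication and, with [A = B_x(1)], half of the
   coarse characterisation.  Conversely, approximate [T] within [del] by [Op k]
   with [k] supported in [{d <= rk}].  For [y] in [B_x(r)], [(Op k f) y] only sees
   [f] on [B_x(r + rk)], so [(T f) y] is within [2 del] of [(T g) y], [g] the
   truncation of [f] to that ball, and [(T g) y] is a sum of at most [N] matrix
   coefficients over [B_x(r + rk)], [N] given by bounded geometry.  Since
   [B_x(r)] also has boundedly many points, [||1_{B_x(r)} T||] is small once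
   [del] and those coefficients are.  For a coarse filter, every [x] in [F^(r)]
   has [B_x(r)] inside [F], so smallness of [<y, T z>] on [F x F] gives
   smallness on balls. *)

Section ComplexModulus.
Context {R : realType}.
Implicit Types z w : R[i].

Lemma cabs_ge0 z : 0 <= cabs z.
Proof. by case: z => a b; exact: sqrtr_ge0. Qed.

Lemma cabsD z w : cabs (z + w) <= cabs z + cabs w.
Proof. exact: le_normcD. Qed.

Lemma cabsM z w : cabs (z * w) = cabs z * cabs w.
Proof. exact: ComplexField.Normc.normcM. Qed.

Lemma cabs0 : cabs (0 : R[i]) = 0.
Proof. exact: ComplexField.Normc.normc0. Qed.

Lemma cabsB z w : cabs (z - w) = cabs (w - z).
Proof. by rewrite -opprB; exact: normcN. Qed.

Lemma cabs_sum (I : Type) (s : seq I) (F : I -> R[i]) :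
  cabs (\sum_(i <- s) F i) <= \sum_(i <- s) cabs (F i).
Proof.
elim: s => [|a s IH]; first by rewrite !big_nil cabs0.
by rewrite !big_cons; apply: le_trans (cabsD _ _) _; exact: lerD.
Qed.

Lemma cabs_indic_le1 (T : Type) (A : set T) (x : T) : cabs (\1_A x : R[i]) <= 1.
Proof.
rewrite indicE; case: (x \in A); last by rewrite cabs0.
by have -> : cabs (1 : R[i]) = 1 by exact: ComplexField.Normc.normc1.
Qed.

End ComplexModulus.

Lemma sumr_le_size_mul {R : numDomainType} (I : eqType) (s : seq I) (F : I -> R) c :
  (forall i, i \in s -> F i <= c) -> \sum_(i <- s) F i <= (size s)%:R * c.
Proof.
rewrite mulr_natl; elim: s => [|a s IH] Fc; first by rewrite big_nil.
rewrite big_cons /= mulrS; apply: lerD; first by rewrite Fc ?mem_head.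
by apply: IH => i si; rewrite Fc // in_cons si orbT.
Qed.

Section L2.
Context {R : realType} {X : choiceType}.
Local Notation C := (R[i]).
Implicit Types (f g : X -> C).

Lemma esum_sqr_cabs_ge0 g : (0 <= \esum_(x in [set: X]) ((cabs (g x)) ^+ 2)%:E)%E.
Proof. by apply: esum_ge0 => x _; rewrite lee_fin sqr_ge0. Qed.

Lemma cabs_le_l2norm g y : ((cabs (g y))%:E <= l2norm g)%E.
Proof.
rewrite /l2norm; case: asboolP => [hl2|_]; last by rewrite leey.
set S := esum _ _.
have Sge : (((cabs (g y)) ^+ 2)%:E <= S)%E.
  apply: esum_ge; exists [set y]; first by split => //; exact: finite_set1.
  by rewrite fsbig_set1.
have Sfin : S \is a fin_num by rewrite ge0_fin_numE //; exact: esum_sqr_cabs_ge0.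
rewrite -(fineK Sfin) lee_fin in Sge.
rewrite lee_fin -(ger0_norm (cabs_ge0 (g y))) -sqrtr_sqr.
exact: ler_wsqrtr.
Qed.

Lemma l2norm_le_size_mul g (s : seq X) (M : R) : uniq s -> 0 <= M ->
  (forall x, x \notin s -> g x = 0) -> (forall x, cabs (g x) <= M) ->
  l2 g /\ (l2norm g <= ((size s)%:R * M)%:E)%E.
Proof.
move=> us M0 g0 gM.
have E : \esum_(x in [set: X]) ((cabs (g x)) ^+ 2)%:E =
         (\sum_(x <- s) (cabs (g x)) ^+ 2)%:E.
  rewrite (eq_esum (b := fun x => if x \in [set` s] then
                       ((cabs (g x)) ^+ 2)%:E else 0%E)); last first.
    move=> x _; case: ifPn => // /negP xs.
    by rewrite g0 ?cabs0 ?expr0n //; apply/negP => xs'; apply: xs; rewrite inE.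
  rewrite -esum_mkcond esum_fset; last 2 first.
  - exact: finite_seq.
  - by move=> i _; rewrite lee_fin sqr_ge0.
  by rewrite -fsbig_seq // sumEFin.
have Sle : \sum_(x <- s) (cabs (g x)) ^+ 2 <= (size s)%:R * M ^+ 2.
  by apply: sumr_le_size_mul => x _; rewrite !expr2 ler_pM ?cabs_ge0.
have hl2 : l2 g by rewrite /l2 E ltry.
split => //; rewrite /l2norm asboolT // E /= lee_fin.
have n0 : 0 <= (size s)%:R * M :> R by rewrite mulr_ge0.
rewrite -(ger0_norm n0) -sqrtr_sqr; apply: ler_wsqrtr.
apply: (le_trans Sle); rewrite exprMn ler_wpM2r ?sqr_ge0 //.
by rewrite expr2 -natrM ler_nat; case: (size s) => // n; rewrite leq_pmulr.
Qed.

Lemma l2norm_le_dominated f g : l2 f -> (forall x, cabs (g x) <= cabs (f x)) ->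
  l2 g /\ (l2norm g <= l2norm f)%E.
Proof.
move=> hf gf.
have le : (\esum_(x in [set: X]) ((cabs (g x)) ^+ 2)%:E <=
           \esum_(x in [set: X]) ((cabs (f x)) ^+ 2)%:E)%E.
  by apply: le_esum => x _; rewrite lee_fin !expr2 ler_pM ?cabs_ge0.
have hg : l2 g by rewrite /l2 (le_lt_trans le).
split => //; rewrite /l2norm !asboolT // lee_fin; apply: ler_wsqrtr.
by apply: fine_le; rewrite // ge0_fin_numE ?esum_sqr_cabs_ge0.
Qed.

Lemma l2_indic1 (z : X) :
  l2 (\1_[set z] : X -> C) /\ (l2norm (\1_[set z] : X -> C) <= 1%:E)%E.
Proof.
have := @l2norm_le_size_mul (\1_[set z]) [:: z] 1 isT ler01.
rewrite /= mul1r; apply; last by move=> x; exact: cabs_indic_le1.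
by move=> x; rewrite inE indicE => /negPf xz; rewrite memNset // => exz; rewrite exz eqxx in xz.
Qed.

Definition restrict_seq (s : seq X) f : X -> C :=
  fun x => \sum_(z <- s) f z * \1_[set z] x.

Lemma restrict_seqE (s : seq X) f x :
  uniq s -> restrict_seq s f x = if x \in s then f x else 0.
Proof.
move=> us; rewrite /restrict_seq; case: ifPn => xs.
  rewrite (bigD1_seq x) //= indicE mem_set // mulr1 big1 ?addr0 // => z zx.
  by rewrite indicE memNset ?mulr0 //= => xz; rewrite xz eqxx in zx.
rewrite big1_seq // => z /= zs.
by rewrite indicE memNset ?mulr0 //= => xz; rewrite xz zs in xs.
Qed.

Lemma l2_restrict_seq (s : seq X) f : l2 (restrict_seq s f).
Proof.
have [] := @l2norm_le_size_mul (restrict_seq s f) (undup s)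
   (\sum_(z <- s) cabs (f z)) (undup_uniq s) _ _ _ => //.
- by apply: sumr_ge0 => z _; exact: cabs_ge0.
- move=> x; rewrite mem_undup => xs; rewrite /restrict_seq big1_seq // => z /= zs.
  by rewrite indicE memNset ?mulr0 //= => xz; rewrite xz zs in xs.
- move=> x; apply: le_trans (cabs_sum _ _ _) _; apply: ler_sum => z _.
  by rewrite cabsM ler_piMr ?cabs_ge0 ?cabs_indic_le1.
Qed.

Lemma cabs_le_opnorm (A : (X -> C) -> (X -> C)) f y :
  l2 f -> (l2norm f <= 1%:E)%E -> ((cabs (A f y))%:E <= opnorm A)%E.
Proof.
move=> hf hf1; apply: le_trans (cabs_le_l2norm _ y) _.
by apply: ereal_sup_ubound; exists f.
Qed.

Lemma coef_le_opnorm_restr (A : set X) (T : (X -> C) -> (X -> C)) y z :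
  A y -> ((cabs (coef T y z))%:E <= opnorm (restr A T))%E.
Proof.
move=> Ay; have [h1 h2] := l2_indic1 z.
have := cabs_le_opnorm (restr A T) \1_[set z] y h1 h2.
by rewrite {1}/restr indicE mem_set // mul1r.
Qed.

Lemma opnorm_restr_le {A : set X} {T : (X -> C) -> (X -> C)} {s : seq X} {M} :
  uniq s -> 0 <= M -> (forall x, A x -> x \in s) ->
  (forall f y, l2 f -> (l2norm f <= 1%:E)%E -> A y -> cabs (T f y) <= M) ->
  (opnorm (restr A T) <= ((size s)%:R * M)%:E)%E.
Proof.
move=> us M0 As TM; apply: ge_ereal_sup => _ [f [hf hf1] <-].
have [] // := @l2norm_le_size_mul (restr A T f) s M us M0 => w;
  rewrite /restr indicE.
  by move=> ws; rewrite memNset ?mul0r // => /As; exact/negP.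
case: (boolP (w \in A)) => wA; last by rewrite mul0r cabs0.
by rewrite mul1r TM //; exact: set_mem.
Qed.

End L2.

Section LinearOnL2.
Context {R : realType} {X : choiceType} {T : (X -> R[i]) -> (X -> R[i])}.
Local Notation C := (R[i]).

Hypothesis Tlin : forall (a : C) (f g : X -> C), l2 f -> l2 g ->
  T (fun x => a * f x + g x) = (fun x => a * T f x + T g x).

Lemma l2_linear0 : T (fun _ => 0) = (fun _ => 0).
Proof.
have l2_0 : l2 (fun _ : X => 0 : C).
  by have [] // := @l2norm_le_size_mul R X (fun _ => 0) [::] 0 isT (lexx _) => x;
    rewrite cabs0.
have := Tlin (-1) _ _ l2_0 l2_0.
rewrite (_ : (fun x : X => -1 * 0 + 0) = fun _ => 0 : C); last first.
  by apply: boolp.funext => x; rewrite mulr0 addr0.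
by move=> ->; apply: boolp.funext => x; rewrite mulN1r addNr.
Qed.

Lemma l2_linear_restrict_seq (s : seq X) (f : X -> C) y :
  T (restrict_seq s f) y = \sum_(z <- s) f z * coef T y z.
Proof.
elim: s => [|a s IH].
  rewrite big_nil (_ : restrict_seq [::] f = fun _ => 0) ?l2_linear0 //.
  by apply: boolp.funext => x; rewrite /restrict_seq big_nil.
rewrite big_cons -IH (_ : restrict_seq _ f =
   fun x => f a * \1_[set a] x + restrict_seq s f x); last first.
  by apply: boolp.funext => x; rewrite /restrict_seq big_cons.
by rewrite Tlin //; [exact: (l2_indic1 a).1 | exact: l2_restrict_seq].
Qed.

Lemma cabs_linear_restrict_seq_le {s : seq X} {f : X -> C} {y eta} :
  (l2norm f <= 1%:E)%E -> (forall z, z \in s -> cabs (coef T y z) <= eta) ->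
  cabs (T (restrict_seq s f) y) <= (size s)%:R * eta.
Proof.
move=> f1 coef_eta; rewrite l2_linear_restrict_seq.
apply: le_trans (cabs_sum _ _ _) _; apply: sumr_le_size_mul => z zs.
rewrite cabsM; apply: le_trans (coef_eta z zs); rewrite ler_piMl ?cabs_ge0 //.
by rewrite -lee_fin; apply: le_trans f1; exact: cabs_le_l2norm.
Qed.

End LinearOnL2.

Section Geometry.
Context {R : realType} {X : choiceType} {d : X -> X -> R}.

Lemma ball_enum_bounded : bounded_geometry d ->
  forall r : R, 0 < r -> exists N : nat, forall x : X, exists s : seq X,
    [/\ uniq s, forall y, Defs.ball_ d x r y <-> y \in s & (size s <= N)%N].
Proof.
move=> dbg r r0; have [N HN] := dbg r r0; exists N => x.
have fin : finite_set (Defs.ball_ d x r).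
  apply: contrapT => inf; have [B BA szB] := infinite_set_fset N.+1 inf.
  have := HN x _ (finmap.fset_uniq B) (fun y yB => BA y yB).
  by rewrite leqNgt szB.
have memE y : (y \in finmap.enum_fset (fset_set (Defs.ball_ d x r))) = (y \in Defs.ball_ d x r).
  exact: in_fset_set.
exists (finmap.enum_fset (fset_set (Defs.ball_ d x r))); split.
- exact: finmap.fset_uniq.
- by move=> y; rewrite memE inE.
- by apply: (HN x); [exact: finmap.fset_uniq | move=> y; rewrite memE inE].
Qed.

Lemma ball_center (x : X) (r : R) : is_metric d -> 0 <= r -> Defs.ball_ d x r x.
Proof. by move=> [_ d0 _ _] r0; rewrite /Defs.ball_ /= (proj2 (d0 x x) erefl). Qed.

Lemma ball_sub_rinterior (F : set X) r x :
  rinterior d F r x -> Defs.ball_ d x r `<=` F.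
Proof.
move=> hx y hy; apply: contrapT => nFy.
have : (ereal_inf [set (d x y0)%:E | y0 in ~` F] <= (d x y)%:E)%E.
  by apply: ereal_inf_lbound; exists y.
move=> /(lt_le_trans hx); rewrite lte_fin => hlt.
by move: hy; rewrite /Defs.ball_ /= leNgt hlt.
Qed.

End Geometry.

Section ControlledApproximation.
Context {R : realType} {X : choiceType}.
Local Notation C := (R[i]).
Context {d : X -> X -> R} {T : (X -> C) -> (X -> C)} {k : X -> X -> C} {rk del : R}.
Hypothesis dmet : is_metric d.
Hypothesis Tlin : forall (a : C) (f g : X -> C), l2 f -> l2 g ->
  T (fun x => a * f x + g x) = (fun x => a * T f x + T g x).
Hypothesis k_controlled : forall a b, rk < d a b -> k a b = 0.
Hypothesis T_near_Op : (opnorm (opsub T (Op k)) < del%:E)%E.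

Lemma Op_controlled_restrict_seq {x r} {L : seq X} f {y} : uniq L ->
  (forall w, Defs.ball_ d x (r + `|rk|) w -> w \in L) -> Defs.ball_ d x r y ->
  Op k f y = Op k (restrict_seq L f) y.
Proof.
have [_ _ _ dtri] := dmet.
move=> uL ballL xy; apply: eq_fsbigr => w; rewrite inE /= => kyw.
rewrite restrict_seqE // ballL //; apply: le_trans (dtri x y w) _.
apply: lerD => //; apply: le_trans (ler_norm rk); rewrite leNgt.
by apply/negP => /k_controlled kyw0; rewrite kyw0 eqxx in kyw.
Qed.

Lemma cabs_sub_Op_lt f y : l2 f -> (l2norm f <= 1%:E)%E ->
  cabs (T f y - Op k f y) < del.
Proof.
by move=> hf hf1; rewrite -lte_fin; apply: le_lt_trans T_near_Op;
  exact: (cabs_le_opnorm (opsub T (Op k)) f y hf hf1).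
Qed.

Lemma cabs_le_restrict_seq {x r} {L : seq X} {f y} : uniq L ->
  (forall w, Defs.ball_ d x (r + `|rk|) w -> w \in L) -> Defs.ball_ d x r y ->
  l2 f -> (l2norm f <= 1%:E)%E ->
  cabs (T f y) <= 2 * del + cabs (T (restrict_seq L f) y).
Proof.
move=> uL ballL xy hf hf1; set g := restrict_seq L f.
have [hg hgf] : l2 g /\ (l2norm g <= l2norm f)%E.
  apply: l2norm_le_dominated => // w; rewrite /g restrict_seqE //.
  by case: ifP; rewrite ?cabs0 ?cabs_ge0.
have hg1 : (l2norm g <= 1%:E)%E by apply: le_trans hf1.
have OpE : Op k f y = Op k g y := Op_controlled_restrict_seq f uL ballL xy.
have ef := cabs_sub_Op_lt f y hf hf1.
have eg := cabs_sub_Op_lt g y hg hg1.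
have -> : T f y = (T f y - Op k f y) + (Op k g y - T g y) + T g y.
  by rewrite OpE; ring.
have := cabsD (T f y - Op k f y) (Op k g y - T g y).
rewrite (cabsB (Op k g y)) => e2; apply: le_trans (cabsD _ _) _; lra.
Qed.

Lemma cabs_le_coef_bound {x r} {L : seq X} {f y eta} : uniq L ->
  (forall w, Defs.ball_ d x (r + `|rk|) w -> w \in L) ->
  (forall z, z \in L -> cabs (coef T y z) <= eta) -> Defs.ball_ d x r y ->
  l2 f -> (l2norm f <= 1%:E)%E ->
  cabs (T f y) <= 2 * del + (size L)%:R * eta.
Proof.
move=> uL ballL coef_eta xy hf hf1.
apply: le_trans (cabs_le_restrict_seq uL ballL xy hf hf1) _.
by rewrite lerD2l; apply: (cabs_linear_restrict_seq_le Tlin).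
Qed.

End ControlledApproximation.

Section LocalisedNorm.
Context {R : realType} {X : choiceType}.
Local Notation C := (R[i]).
Context {d : X -> X -> R} {xi : set_system X}.
Hypotheses (xiF : Filter xi) (dmet : is_metric d) (dbg : bounded_geometry d).

Lemma ball_coef_sup_le_opnorm_restr (T : (X -> C) -> (X -> C)) x r :
  (ball_coef_sup d T x r <= opnorm (restr (Defs.ball_ d x r) T))%E.
Proof.
by apply: ge_ereal_sup => _ [[y z] /= [hy _] <-]; exact: coef_le_opnorm_restr.
Qed.

Lemma coef_le_ball_coef_sup (T : (X -> C) -> (X -> C)) {x r y z} :
  Defs.ball_ d x r y -> Defs.ball_ d x r z ->
  ((cabs (coef T y z))%:E <= ball_coef_sup d T x r)%E.
Proof. by move=> hy hz; apply: ereal_sup_ubound; exists (y, z). Qed.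

Lemma flim0_opnorm_restr_ball (T : (X -> C) -> (X -> C)) : in_E d T ->
  (forall r : R, 0 < r -> flim0 xi (fun x => ball_coef_sup d T x r)) ->
  forall r : R, 0 < r -> flim0 xi (fun x => opnorm (restr (Defs.ball_ d x r) T)).
Proof.
move=> [[Tlin _ _] T_approx] coef_small r r0 e e0.
have [N1 ballr] := ball_enum_bounded dbg r r0.
pose del := e / (4 * (N1%:R + 1)).
have del0 : 0 < del by rewrite divr_gt0 // mulr_gt0 // ltr_wpDl.
have [k [[_ _ [rk k_controlled]] T_near_Op]] := T_approx del del0.
have rho0 : 0 < r + `|rk| by rewrite ltr_wpDr.
have [N3 ballrho] := ball_enum_bounded dbg _ rho0.
pose eta := del / (N3%:R + 1).
have eta0 : 0 < eta by rewrite divr_gt0 // ltr_wpDl.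
apply: filterS (coef_small _ rho0 eta eta0) => x /= hx.
have [L [uL ballL szL]] := ballrho x.
have [Lr [uLr ballLr szLr]] := ballr x.
have value_le f y : l2 f -> (l2norm f <= 1%:E)%E -> Defs.ball_ d x r y ->
    cabs (T f y) <= 2 * del + N3%:R * eta.
  move=> hf hf1 xy.
  have ry : Defs.ball_ d x (r + `|rk|) y.
    by apply: le_trans xy _; rewrite lerDl.
  have coef_eta z : z \in L -> cabs (coef T y z) <= eta.
    move=> /ballL zL; apply: ltW; rewrite -lte_fin.
    exact: le_lt_trans (coef_le_ball_coef_sup T ry zL) hx.
  have rho_ballL w : Defs.ball_ d x (r + `|rk|) w -> w \in L by move=> /ballL.
  apply: le_trans (cabs_le_coef_bound dmet Tlin k_controlled T_near_Op
    uL rho_ballL coef_eta xy hf hf1) _.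
  by rewrite lerD2l ler_wpM2r ?ler_nat // ltW.
have M0 : 0 <= 2 * del + N3%:R * eta by rewrite addr_ge0 ?mulr_ge0 // ltW.
apply: le_lt_trans (opnorm_restr_le uLr M0 (fun w => (ballLr w).1) value_le) _.
rewrite lte_fin; apply: (@le_lt_trans _ _ (N1%:R * (2 * del + N3%:R * eta))).
  by rewrite ler_wpM2r ?ler_nat.
have N3eta : N3%:R * eta <= del.
  by rewrite /eta mulrCA ger_pMr // ler_pdivrMr ?ltr_wpDl // mul1r lerDl.
have del_e : 4 * (N1%:R + 1) * del = e.
  by rewrite /del mulrC divfK // mulf_neq0 // gt_eqF // ltr_wpDl.
have N1_ge0 : 0 <= N1%:R :> R by [].
nra.
Qed.

End LocalisedNorm.

Lemma flim0_le {R : realType} {X : choiceType} {xi : set_system X} {g h : X -> \bar R} :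
  Filter xi -> (forall x, (g x <= h x)%E) -> flim0 xi h -> flim0 xi g.
Proof.
move=> xiF gh hlim e e0; apply: filterS (hlim e e0) => x /=.
exact: le_lt_trans (gh x).
Qed.

Section CoarseFilter.
Context {R : realType} {X : choiceType}.
Local Notation C := (R[i]).
Context {d : X -> X -> R} {xi : set_system X}.
Hypotheses (xiF : Filter xi) (dmet : is_metric d).

Lemma flim0_2_coef_of_in_G (T : (X -> C) -> (X -> C)) :
  in_G d xi T -> flim0_2 xi (coef T).
Proof.
move=> [_ G_lim] e e0.
exists [set x | (opnorm (restr (Defs.ball_ d x 1) T) < e%:E)%E]; first exact: G_lim.
move=> x y /= hx _; rewrite -lte_fin; apply: le_lt_trans hx.
exact/coef_le_opnorm_restr/ball_center.
Qed.

Lemma flim0_ball_coef_sup_of_flim0_2 (T : (X -> C) -> (X -> C)) :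
  coarse_filter d xi -> flim0_2 xi (coef T) ->
  forall r : R, 0 < r -> flim0 xi (fun x => ball_coef_sup d T x r).
Proof.
move=> coarse coef_lim r r0 e e0.
have e2 : 0 < e / 2 by rewrite divr_gt0.
have [F xiF_F F_small] := coef_lim (e / 2) e2.
apply: filterS (coarse F r r0 xiF_F) => x /ball_sub_rinterior xF /=.
apply: (@le_lt_trans _ _ (e / 2)%:E); last by rewrite lte_fin; lra.
apply: ge_ereal_sup => _ [[y z] /= [hy hz] <-]; rewrite lee_fin ltW //.
by apply: F_small; exact: xF.
Qed.

End CoarseFilter.

Theorem proposition5p10 (R : realType) (X : choiceType) (d : X -> X -> R)
  (Xinf : infinite_set [set: X])
  (dmet : is_metric d) (ddisc : discrete_metric d)
  (dbg : bounded_geometry d)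
  (xi : set_system X) (xiF : ProperFilter xi) :
  (forall T : (X -> R[i]) -> (X -> R[i]), in_E d T ->
     (in_G d xi T <->
      forall r : R, 0 < r -> flim0 xi (fun x => ball_coef_sup d T x r))) /\
  (coarse_filter d xi ->
     forall T : (X -> R[i]) -> (X -> R[i]),
       in_G d xi T <-> in_E d T /\ flim0_2 xi (coef T)).
Proof.
have xi_filter : Filter xi by exact: xiF.
have G_iff T : in_E d T -> in_G d xi T <->
    forall r : R, 0 < r -> flim0 xi (fun x => ball_coef_sup d T x r).
  move=> ET; split=> [[_ G_lim] r r0 | coef_lim].
    exact: flim0_le xi_filter (ball_coef_sup_le_opnorm_restr T ^~ r) (G_lim r r0).
  by split=> //; exact: flim0_opnorm_restr_ball xi_filter dmet dbg T ET coef_lim.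
split=> // coarse T; split=> [GT | [ET coef_lim]].
  by split; [exact: GT.1 | exact: flim0_2_coef_of_in_G dmet T GT].
by apply/G_iff => //; exact: flim0_ball_coef_sup_of_flim0_2 xi_filter T coarse coef_lim.
Qed.
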